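(* Let $B$ be a space and let $f:E\to X$ be a fibrewise map over $B$ between fibrant spaces over $B$. Then $\mathrm{secat}_B(f)=\mathrm{secat}(f)$.
   Context: A fibrewise space over $B$ is a space $X$ with a map $p_X:X\to B$; a fibrewise map $f:X\to Y$ satisfies $p_Yf=p_X$. A fibrant space over $B$ is a fibrewise space whose projection $p_X$ is a Hurewicz fibration. A fibrewise homotopy is a homotopy $H:X\times[0,1]\to Y$ with $p_Y(H(x,t))=p_X(x)$ for all $t$; write $\simeq_B$. $\mathrm{secat}_B(f)$: least $n$ such that $X$ is covered by $n+1$ open sets $U$ each admitting a fibrewise map $s:U\to E$ with $f\circ s\simeq_B$ the inclusion $U\hookrightarrow X$ ($\infty$ if none). $\mathrm{secat}(f)$ (ordinary sectional category of an arbitrary map): least $n$ such that $X$ is covered by $n+1$ open sets $U$ each admitting a map $s:U\to E$ with $f\circ s$ homotopic to the inclusion $U\hookrightarrow X$ ($\infty$ if none). *)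

From HB Require Import structures.
From mathcomp Require Import all_boot all_order all_algebra.
From mathcomp Require Import all_classical all_reals topology normedtype.
From mathcomp Require Import Rstruct Rstruct_topology.
From Stdlib Require Import Rdefinitions.
Set Implicit Arguments. Unset Strict Implicit. Unset Printing Implicit Defensive.
Local Open Scope classical_set_scope.
Local Open Scope ring_scope.

Definition I01 : set R := `[0%R, 1%R]%classic.

Definition hurewicz_fibration (E B : topologicalType) (p : E -> B) : Prop :=
  continuous p /\
  forall (Z : topologicalType) (g : Z -> E) (h : Z * R -> B),
    continuous g ->
    {within [set: Z] `*` I01, continuous h} ->
    (forall z, h (z, 0%R) = p (g z)) ->
    exists H : Z * R -> E,
      {within [set: Z] `*` I01, continuous H} /\
      (forall z, H (z, 0%R) = g z) /\
      (forall z t, I01 t -> p (H (z, t)) = h (z, t)).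

Definition fibrant (B X : topologicalType) (pX : X -> B) : Prop :=
  hurewicz_fibration pX.

Definition fibrewise_map (B E X : topologicalType) (pE : E -> B) (pX : X -> B)
  (f : E -> X) : Prop := continuous f /\ forall e, pX (f e) = pE e.

(** Maps defined on the
    subspace U are represented by functions on X continuous within U. *)
Definition local_hsection (E X : topologicalType) (f : E -> X) (U : set X) : Prop :=
  exists (s : X -> E) (H : X * R -> X),
    {within U, continuous s} /\
    {within U `*` I01, continuous H} /\
    (forall x, U x -> H (x, 0%R) = f (s x)) /\
    (forall x, U x -> H (x, 1%R) = x).

Definition local_fw_hsection (B E X : topologicalType) (pE : E -> B) (pX : X -> B)
  (f : E -> X) (U : set X) : Prop :=
  exists (s : X -> E) (H : X * R -> X),
    {within U, continuous s} /\
    (forall x, U x -> pE (s x) = pX x) /\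
    {within U `*` I01, continuous H} /\
    (forall x t, U x -> I01 t -> pX (H (x, t)) = pX x) /\
    (forall x, U x -> H (x, 0%R) = f (s x)) /\
    (forall x, U x -> H (x, 1%R) = x).

Definition open_cover_by (X : topologicalType) (P : set X -> Prop) (n : nat) : Prop :=
  exists U : 'I_n.+1 -> set X,
    (forall i, open (U i)) /\ (forall i, P (U i)) /\
    (forall x, exists i, U i x).

(** Least n satisfying P, as a value in nat ∪ {∞} (None = ∞). *)
Definition least_nat (P : nat -> Prop) : option nat :=
  match pselect (exists n, P n) with
  | left h =>
      let h' : exists n, (fun m => `[< P m >]) n :=
        let: ex_intro n Pn := h in ex_intro _ n (asboolT Pn) in
      Some (ex_minn h')
  | right _ => None
  end.

Definition secat (E X : topologicalType) (f : E -> X) : option nat :=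
  least_nat (fun n => open_cover_by (local_hsection f) n).

Definition secat_B (B E X : topologicalType) (pE : E -> B) (pX : X -> B)
  (f : E -> X) : option nat :=
  least_nat (fun n => open_cover_by (local_fw_hsection pE pX f) n).

(* Given a local homotopy section (s, H) of f over U, lift the projected
   homotopy pX o H through pE starting at s; its end s' is a fibrewise section.
   Running back along the lift (through f) and then along H gives a homotopy
   K from f o s' to the inclusion whose projection is the loop g^-1 . g, with
   g = pX o H.  That loop contracts rel endpoints onto the constant path at
   pX x; lifting this contraction through pX and reading the lift along the
   three other sides of the square yields a fibrewise homotopy from f o s' to
   the inclusion.  Conversely a fibrewise local section is a local section,
   so both sectional categories are minima over the same open covers. *)

From mathcomp Require Import all_boot all_order all_algebra all_classical all_reals.
From mathcomp Require Import topology normedtype Rstruct Rstruct_topology lra.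
From Stdlib Require Import Rdefinitions.
Local Open Scope classical_set_scope.
Local Open Scope ring_scope.
Import Order.TTheory GRing.Theory Num.Theory numFieldNormedType.Exports.

(* Read numerals of type R as ring elements rather than Stdlib literals
   [IZR _], which lra does not understand. *)
Bind Scope ring_scope with R.

Lemma fst_continuous {T U : topologicalType} : continuous (@fst T U).
Proof. by move=> q; exact: cvg_fst. Qed.

Lemma snd_continuous {T U : topologicalType} : continuous (@snd T U).
Proof. by move=> q; exact: cvg_snd. Qed.

Lemma continuous_pair {T U V : topologicalType} (f : T -> U) (g : T -> V) :
  continuous f -> continuous g -> continuous (fun x => (f x, g x)).
Proof. by move=> cf cg x; exact: cvg_pair (cf x) (cg x). Qed.

Lemma continuous_map_snd {T : topologicalType} (g : R -> R) :
  continuous g -> continuous (fun q : T * R => (q.1, g q.2)).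
Proof.
move=> cg; apply: continuous_pair; first exact: fst_continuous.
by move=> q; exact: continuous_comp (@snd_continuous _ _ q) (cg q.2).
Qed.

Lemma continuous_affine {K : numFieldType} (a b : K) :
  continuous (fun t : K => a * t + b).
Proof.
move=> t; apply: (@continuousD _ K^o K (fun t : K => a * t) (fun=> b)).
  exact: mulrl_continuous.
exact: cst_continuous.
Qed.

Lemma continuous_maxr {T : topologicalType} (f g : T -> R) :
  continuous f -> continuous g -> continuous (fun x => Num.max (f x) (g x)).
Proof. by move=> cf cg x; exact: (@continuous_max _ _ f g x (cf x) (cg x)). Qed.

Lemma continuous_minr {T : topologicalType} (f g : T -> R) :
  continuous f -> continuous g -> continuous (fun x => Num.min (f x) (g x)).
Proof. by move=> cf cg x; exact: (@continuous_min _ _ f g x (cf x) (cg x)). Qed.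

Lemma continuous_into_subspace {T U : topologicalType} {B : set U} {f : T -> U} :
  continuous f -> (forall x, B (f x)) -> continuous (f : T -> subspace B).
Proof.
move=> cf fB x; apply/(@subspace_cvgP _ B _ (f x) _ (fB x)) => P /= BP.
by have := cf x _ BP; rewrite !nbhs_simpl /=; apply: filterS => y; apply; exact: fB.
Qed.

Lemma continuous_glue_le {T Y : topologicalType} (r : T -> R) (a : R)
    (F G : T -> Y) :
  continuous r -> continuous F -> continuous G ->
  (forall x, r x = a -> F x = G x) ->
  continuous (fun x => if r x <= a then F x else G x).
Proof.
move=> cr cF cG FG; apply/continuous_subspace_setT.
have -> : [set: T] = [set x | r x <= a] `|` [set x | a <= r x].
  apply/seteqP; split=> // x _ /=.
  by case: (lerP (r x) a) => h; [left | right; exact: ltW].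
apply: withinU_continuous.
- apply: (@preimage_closed _ _ r [set y | y <= a]) => [x _|]; first exact: cr.
  exact: closed_le.
- apply: (@preimage_closed _ _ r [set y | a <= y]) => [x _|]; first exact: cr.
  exact: closed_ge.
- apply: (subspace_eq_continuous _ (continuous_subspaceT cF)).
  by move=> x; rewrite inE /= => xa; rewrite /from_subspace xa.
- apply: (subspace_eq_continuous _ (continuous_subspaceT cG)).
  move=> x; rewrite inE /= => ax; rewrite /from_subspace; case: ifP => // xa.
  by rewrite FG //; apply/eqP; rewrite eq_le xa.
Qed.

Lemma continuous_subspace_setX {T Y W : topologicalType} {A : set T} {D : set Y}
    {K : T * Y -> W} :
  continuous (K : subspace A * Y -> W) -> {within A `*` D, continuous K}.
Proof.
move=> cK; apply/continuous_subspace_prodP => p _.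
have cincl : continuous (fun q : subspace A * subspace D =>
                           (q.1, incl_subspace q.2) : subspace A * Y).
  apply: continuous_pair; first exact: fst_continuous.
  by move=> q; exact: continuous_comp (@snd_continuous _ _ q)
                        (@incl_subspace_continuous _ D q.2).
have -> : K = K \o (fun q : subspace A * subspace D => (q.1, incl_subspace q.2)).
  by apply: funext => -[].
exact: continuous_comp (cincl p) (cK _).
Qed.

Lemma I01E (t : R) : I01 t <-> 0 <= t <= 1.
Proof. by rewrite /I01 /= in_itv. Qed.

Definition clamp (t : R) : R := Num.max 0 (Num.min t 1).

Lemma clamp_I01 t : I01 (clamp t).
Proof. by apply/I01E; rewrite /clamp le_max lexx ge_max ler01 ge_min lexx orbT. Qed.

Lemma clamp_id t : I01 t -> clamp t = t.
Proof. by move=> /I01E/andP[t0 t1]; rewrite /clamp (min_l t1) (max_r t0). Qed.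

Lemma clampK t : clamp (clamp t) = clamp t.
Proof. exact/clamp_id/clamp_I01. Qed.

Lemma clamp_le0 t : t <= 0 -> clamp t = 0.
Proof. by move=> t0; rewrite /clamp max_l // ge_min t0. Qed.

Lemma clamp_ge1 t : 1 <= t -> clamp t = 1.
Proof. by move=> t1; rewrite /clamp min_r // max_r. Qed.

Lemma clamp_continuous : continuous clamp.
Proof.
apply: continuous_maxr; first exact: cst_continuous.
by apply: continuous_minr; [move=> t; exact: cvg_id | exact: cst_continuous].
Qed.

(* Off A the points of [subspace A] are isolated, so the extension [c] is
   irrelevant for continuity. *)
Lemma continuous_subspace_extend_clamp {T Y : topologicalType} {A : set T}
    {H : T * R -> Y} (c : T -> Y) :
  {within A `*` I01, continuous H} ->
  continuous (fun p : subspace A * R =>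
                if `[< A p.1 >] then H (p.1, clamp p.2) else c p.1).
Proof.
move=> /continuous_subspace_prodP cH.
set F := fun p : subspace A * R => _; move=> [x t]; rewrite /continuous_at.
have near_x (P : set T) : nbhs (x : subspace A) P ->
    \forall p \near ((x, t) : subspace A * R), P p.1.
  by move=> Px; exact: (@filter_prod1 _ _ _ _ (nbhs_filter t) _ Px).
case: (pselect (A x)) => Ax; last first.
  have near_eqx : \forall p \near ((x, t) : subspace A * R), p.1 = x.
    by apply: (near_x [set x]); case: (nbhs_subspaceP A x) => // _ y.
  have -> : F (x, t) = c x by rewrite /F /= asboolF.
  apply: cvg_trans _ (@cst_continuous (subspace A * R)%type Y (c x) (x, t)).
  apply: near_eq_cvg; move: near_eqx; apply: filterS => -[y s] /= ->.
  by rewrite /F /= asboolF.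
have near_A : \forall p \near ((x, t) : subspace A * R), A p.1.
  by apply: (near_x A); case: (nbhs_subspaceP A x) => // _; exact: withinT.
have cclamp : continuous (clamp : R -> subspace I01).
  exact: continuous_into_subspace clamp_continuous clamp_I01.
have cg : continuous (fun p : subspace A * R =>
                        (p.1, clamp p.2) : subspace A * subspace I01).
  apply: continuous_pair; first exact: fst_continuous.
  by move=> q; exact: continuous_comp (@snd_continuous _ _ q) (cclamp q.2).
have -> : F (x, t) = H (x, clamp t) by rewrite /F /= asboolT.
apply: cvg_trans _ (continuous_comp (cg (x, t)) (cH (x, clamp t) _)).
  apply: near_eq_cvg; move: near_A; apply: filterS => p Ap.
  by rewrite /F /= asboolT.
by rewrite inE; split => //; exact: clamp_I01.
Qed.

(* Reparametrising by [clamp] turns a lift that is only continuous on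
   Z * [0,1] into a map continuous on all of Z * R. *)
Lemma hurewicz_lift_clamp {E B Z : topologicalType} {p : E -> B} {g : Z -> E}
    {h : Z * R -> B} :
  hurewicz_fibration p -> continuous g -> continuous h ->
  (forall z, h (z, 0) = p (g z)) ->
  exists S : Z * R -> E, [/\ continuous S, forall z, S (z, 0) = g z
    & forall z t, p (S (z, t)) = h (z, clamp t)].
Proof.
move=> [_ lift] cg ch h0.
have [L [cL [L0 pL]]] := lift Z g h cg (continuous_subspaceT ch) h0.
exists (fun q => L (q.1, clamp q.2)); split.
- have cc : continuous (fun q : Z * R =>
                          (q.1, clamp q.2) : subspace ([set: Z] `*` I01)).
    apply: continuous_into_subspace; first exact: continuous_map_snd clamp_continuous.
    by move=> q; split => //; exact: clamp_I01.
  by move=> q; exact: continuous_comp (cc q) (cL _).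
- by move=> z; rewrite clamp_le0 //; exact: L0.
- by move=> z t; rewrite pL //; exact: clamp_I01.
Qed.

Definition hreverse {T Y : Type} (F : T * R -> Y) (p : T * R) : Y :=
  F (p.1, 1 - p.2).

Definition hconcat {T Y : Type} (F G : T * R -> Y) (p : T * R) : Y :=
  if p.2 <= 2^-1 then F (p.1, 2 * p.2) else G (p.1, 2 * p.2 - 1).

Lemma hconcat_comp {T Y W : Type} (g : Y -> W) (F G : T * R -> Y) (p : T * R) :
  g (hconcat F G p) = hconcat (g \o F) (g \o G) p.
Proof. by rewrite /hconcat; case: ifP. Qed.

Lemma hconcat0 {T Y : Type} (F G : T * R -> Y) z : hconcat F G (z, 0) = F (z, 0).
Proof. by rewrite /hconcat /= ifT ?mulr0 //; lra. Qed.

Lemma hconcat1 {T Y : Type} (F G : T * R -> Y) z : hconcat F G (z, 1) = G (z, 1).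
Proof.
rewrite /hconcat /= ifF; last by apply/negbTE; rewrite -ltNge; lra.
by congr (G (z, _)); lra.
Qed.

Lemma hreverse_continuous {T Y : topologicalType} (F : T * R -> Y) :
  continuous F -> continuous (hreverse F).
Proof.
move=> cF; have c1 : continuous (fun q : T * R => (q.1, 1 - q.2)).
  have -> : (fun q : T * R => (q.1, 1 - q.2)) = (fun q => (q.1, -1 * q.2 + 1)).
    by apply: funext => q; congr (_, _); lra.
  exact: continuous_map_snd (@continuous_affine _ (-1) 1).
by move=> q; exact: continuous_comp (c1 q) (cF _).
Qed.

Lemma hconcat_continuous {T Y : topologicalType} (F G : T * R -> Y) :
  continuous F -> continuous G -> (forall z, F (z, 1) = G (z, 0)) ->
  continuous (hconcat F G).
Proof.
move=> cF cG FG; apply: continuous_glue_le; first exact: snd_continuous.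
- have c2 : continuous (fun q : T * R => (q.1, 2 * q.2)).
    have -> : (fun q : T * R => (q.1, 2 * q.2)) = (fun q => (q.1, 2 * q.2 + 0)).
      by apply: funext => q; rewrite addr0.
    exact: continuous_map_snd (@continuous_affine _ 2 0).
  by move=> q; exact: continuous_comp (c2 q) (cF _).
- have c2 : continuous (fun q : T * R => (q.1, 2 * q.2 - 1)).
    exact: continuous_map_snd (@continuous_affine _ 2 (-1)).
  by move=> q; exact: continuous_comp (c2 q) (cG _).
- move=> [z t] /= ->; rewrite (_ : 2 * 2^-1 = 1) ?FG //; last by lra.
  by congr (G (z, _)); lra.
Qed.

(* A homotopy rel endpoints from the tent [v |-> |2v - 1|] (at t = 0) to the
   constant 1 (at t = 1); it contracts every loop [hreverse g . g]. *)
Definition tent_contraction (p : R * R) : R :=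
  Num.max (Num.max (-2 * p.1 + 1) (2 * p.1 - 1)) p.2.

Lemma tent_contraction_continuous : continuous tent_contraction.
Proof.
apply: continuous_maxr; last exact: snd_continuous.
apply: continuous_maxr => q.
  exact: continuous_comp (@fst_continuous _ _ q) (@continuous_affine _ (-2) 1 q.1).
exact: continuous_comp (@fst_continuous _ _ q) (@continuous_affine _ 2 (-1) q.1).
Qed.

Lemma hconcat_hreverse {T Y : Type} (g : T * R -> Y) (q : T * R) :
  hconcat (hreverse g) g q = g (q.1, tent_contraction (q.2, 0)).
Proof.
case: q => z v; rewrite /hconcat /hreverse /tent_contraction /=.
case: (lerP v 2^-1) => hv; congr (g (z, _)); rewrite !maxEle;
  case: (lerP (-2 * v + 1) (2 * v - 1)) => ?; case: lerP => ?; lra.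
Qed.

Lemma tent_contraction_eq1 (a b : R) : 0 <= a <= 1 -> b <= 1 ->
  [\/ a = 0, a = 1 | b = 1] -> tent_contraction (a, b) = 1.
Proof.
move=> /andP[a0 a1] b1 hab; rewrite /tent_contraction /= !maxEle.
by case: (lerP (-2 * a + 1) (2 * a - 1)) => ?; case: lerP => ?; case: hab => ?; lra.
Qed.

(* The path from (0,0) up to (0,1), across to (1,1) and down to (1,0). *)
Definition square_boundary (w : R) : R * R :=
  (clamp (3 * w - 1), clamp (Num.min (3 * w) (3 - 3 * w))).

Lemma square_boundary_continuous : continuous square_boundary.
Proof.
have cmin : continuous (fun w : R => Num.min (3 * w) (3 - 3 * w)).
  apply: continuous_minr; first exact: mulrl_continuous.
  have -> : (fun w : R => 3 - 3 * w) = (fun w => -3 * w + 3).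
    by apply: funext => w; lra.
  exact: (@continuous_affine _ (-3) 3).
apply: continuous_pair => w.
  exact: continuous_comp (@continuous_affine R 3 (-1) w) (clamp_continuous _).
exact: continuous_comp (cmin w) (clamp_continuous _).
Qed.

Lemma square_boundary0 : square_boundary 0 = (0, 0).
Proof.
rewrite /square_boundary (@clamp_le0 (3 * 0 - 1)); last by lra.
by rewrite clamp_le0 // ge_min; apply/orP; left; lra.
Qed.

Lemma square_boundary1 : square_boundary 1 = (1, 0).
Proof.
rewrite /square_boundary clamp_ge1; last by lra.
by rewrite clamp_le0 // ge_min; apply/orP; right; lra.
Qed.

Lemma tent_contraction_square_boundary w :
  tent_contraction (square_boundary w) = 1.
Proof.
have /I01E a01 := clamp_I01 (3 * w - 1).
have /I01E/andP[_ b1] := clamp_I01 (Num.min (3 * w) (3 - 3 * w)).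
apply: tent_contraction_eq1 => //.
case: (lerP (3 * w - 1) 0) => w0; first by apply: Or31; exact: clamp_le0.
case: (lerP 1 (3 * w - 1)) => w1; first by apply: Or32; exact: clamp_ge1.
by apply: Or33; apply: clamp_ge1; rewrite le_min; apply/andP; split; lra.
Qed.

Lemma hurewicz_fibrewise_homotopy {X B Z : topologicalType} {p : X -> B}
    {K : Z * R -> X} {g : Z * R -> B} :
  hurewicz_fibration p -> continuous K -> continuous g ->
  (forall q, p (K q) = hconcat (hreverse g) g q) ->
  exists K' : Z * R -> X, [/\ continuous K',
    forall z, K' (z, 0) = K (z, 0), forall z, K' (z, 1) = K (z, 1)
    & forall z w, p (K' (z, w)) = g (z, 1)].
Proof.
move=> fib cK cg pK.
pose h (r : (Z * R) * R) : B := g (r.1.1, tent_contraction (r.1.2, r.2)).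
have ch : continuous h.
  have c2 : continuous (fun r : (Z * R) * R => (r.1.2, r.2)).
    apply: continuous_pair; last exact: snd_continuous.
    move=> r.
    exact: continuous_comp (@fst_continuous _ _ r) (@snd_continuous _ _ r.1).
  have c : continuous (fun r : (Z * R) * R =>
                         (r.1.1, tent_contraction (r.1.2, r.2))).
    apply: continuous_pair; last first.
      by move=> r; exact: continuous_comp (c2 r) (tent_contraction_continuous _).
    exact: (fun r =>
      continuous_comp (@fst_continuous _ _ r) (@fst_continuous _ _ r.1)).
  by move=> r; exact: continuous_comp (c r) (cg _).
have h0 q : h (q, 0) = p (K q) by rewrite pK hconcat_hreverse.
have [M [cM M0 pM]] := hurewicz_lift_clamp fib cK ch h0.
pose K' (q : Z * R) := M ((q.1, (square_boundary q.2).1), (square_boundary q.2).2).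
exists K'; split.
- have csb (q : Z * R) : {for q, continuous (square_boundary \o snd)}.
    exact: continuous_comp (@snd_continuous _ _ q) (square_boundary_continuous _).
  have c : continuous (fun q : Z * R =>
      ((q.1, (square_boundary q.2).1), (square_boundary q.2).2)).
    apply: continuous_pair; first apply: continuous_pair.
    + exact: fst_continuous.
    + by move=> q; exact: continuous_comp (csb q) (fst_continuous _).
    + by move=> q; exact: continuous_comp (csb q) (snd_continuous _).
  by move=> q; exact: continuous_comp (c q) (cM _).
- by move=> z; rewrite /K' square_boundary0 M0.
- by move=> z; rewrite /K' square_boundary1 M0.
- move=> z w; rewrite /K'.
  have := tent_contraction_square_boundary w.
  have : I01 (square_boundary w).2 by exact: clamp_I01.
  case: (square_boundary w) => a b /= b01 ab1.
  by rewrite pM /h /= clamp_id // ab1.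
Qed.

Lemma local_hsection_subspace {E X : topologicalType} {f : E -> X} {U : set X} :
  local_hsection f U ->
  exists (s : subspace U -> E) (G : subspace U * R -> X),
    [/\ continuous s, continuous G, forall z, G (z, 0) = f (s z),
        forall x, U x -> G (x, 1) = x & forall z t, G (z, clamp t) = G (z, t)].
Proof.
move=> [s [H [cs [cH [H0 H1]]]]].
pose G (p : subspace U * R) : X :=
  if `[< U p.1 >] then H (p.1, clamp p.2) else f (s p.1).
exists s, G; split => //.
- exact: continuous_subspace_extend_clamp (fun x => f (s x)) cH.
- move=> z; rewrite /G; case: (pselect (U z)) => Uz; last by rewrite asboolF.
  by rewrite asboolT // clamp_le0 // H0.
- by move=> x Ux; rewrite /G asboolT // clamp_ge1 // H1.
- by move=> z t; rewrite /G /= clampK.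
Qed.

Lemma local_hsection_fibrewise {B E X : topologicalType} {pE : E -> B}
    {pX : X -> B} {f : E -> X} (U : set X) :
  fibrant pE -> fibrant pX -> fibrewise_map pE pX f ->
  local_hsection f U -> local_fw_hsection pE pX f U.
Proof.
move=> fibE fibX [cf pf] /local_hsection_subspace[s [G [cs cG G0 G1 GK]]].
have cpG : continuous (pX \o G) by move=> q; exact: continuous_comp (cG q) (fibX.1 _).
have pG0 z : (pX \o G) (z, 0) = pE (s z) by rewrite /= G0 pf.
have [S [cS S0 pS]] := hurewicz_lift_clamp fibE cs cpG pG0.
pose K := hconcat (hreverse (f \o S)) G.
have cK : continuous K.
  apply: hconcat_continuous => [||z]; last by rewrite /hreverse /= subrr S0 G0.
    by apply: hreverse_continuous => q; exact: continuous_comp (cS q) (cf _).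
  exact: cG.
have pK q : pX (K q) = hconcat (hreverse (pX \o G)) (pX \o G) q.
  suff <- : pX \o hreverse (f \o S) = hreverse (pX \o G).
    by rewrite /K (hconcat_comp pX).
  by apply: funext => -[z t]; rewrite /hreverse /= pf pS /= GK.
have [K' [cK' K'0 K'1 pK']] := hurewicz_fibrewise_homotopy fibX cK cpG pK.
exists (fun x => S (x, 1)), K'; do !split.
- have c1 : continuous (fun x : subspace U => (x, 1 : R)).
    by apply: continuous_pair => x; [exact: cvg_id | exact: cst_continuous].
  by move=> x; exact: continuous_comp (c1 x) (cS _).
- by move=> x Ux; rewrite pS /= clamp_ge1 // G1.
- exact: continuous_subspace_setX cK'.
- by move=> x t Ux _; rewrite pK' /= G1.
- by move=> x Ux; rewrite K'0 /K hconcat0 /hreverse /= subr0.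
- by move=> x Ux; rewrite K'1 /K hconcat1 G1.
Qed.

Lemma local_fw_hsection_hsection {B E X : topologicalType} {pE : E -> B}
    {pX : X -> B} {f : E -> X} (U : set X) :
  local_fw_hsection pE pX f U -> local_hsection f U.
Proof. by move=> [s [H [cs [_ [cH [_ HU]]]]]]; exists s, H. Qed.

Theorem theorem2p9 (B E X : topologicalType) (pE : E -> B) (pX : X -> B)
  (f : E -> X) :
  fibrant pE -> fibrant pX -> fibrewise_map pE pX f ->
  secat_B pE pX f = secat f.
Proof.
move=> fibE fibX fwf; rewrite /secat_B /secat.
suff -> : local_fw_hsection pE pX f = local_hsection f by [].
apply: funext => U; apply: propext; split; first exact: local_fw_hsection_hsection.
exact: local_hsection_fibrewise.
Qed.
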